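(* Let $\Phi$ be a real, additive gain graph on $\{1,\dots,n\}$ and let $\mathbf{Q}=(Q_1,\dots,Q_n)\in(\mathbb{E}^d)^n$ with $Q_i\neq Q_j$ whenever $i$ and $j$ are adjacent in $\Phi$. Let $C$ be a circle in $\Phi$ with $l+1$ vertices $v_1,\dots,v_{l+1}$, and let $\mathcal{C}=\{h(e):e\in C\}$. Suppose $Q_{v_1},\dots,Q_{v_{l+1}}$ are affinely independent. If $C$ is balanced, then $\bigcap\mathcal{C}$ is an affine flat of dimension $d-l$.
   Context: $\mathbb{E}^d$ is Euclidean $d$-space with distance $d(\cdot,\cdot)$; $\psi_{ij}(P)=d(P,Q_i)^2-d(P,Q_j)^2$. A real, additive gain graph $\Phi$ on vertex set $\{1,\dots,n\}$ is a finite graph (multiple edges allowed, every edge with two distinct endpoints) with gains $\phi(e;i,j)\in\mathbb{R}$ for each edge $e$ with endpoints $i,j$, satisfying $\phi(e;j,i)=-\phi(e;i,j)$. A circle is a simple closed path; it is balanced if the sum of its gains, read in a consistent direction, is $0$. The Pythagorean arrangement $\mathcal{H}(\Phi;\mathbf{Q})$ consists of the hyperplanes $h(e)=\{P:\psi_{ij}(P)=\phi(e;i,j)\}$, one for each edge $e$ with endpoints $i,j$. *)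

From HB Require Import structures.
From mathcomp Require Import all_boot all_order all_algebra.
From mathcomp Require Import reals.
Set Implicit Arguments. Unset Strict Implicit. Unset Printing Implicit Defensive.
Import Order.TTheory GRing.Theory Num.Theory.
Local Open Scope ring_scope.

Definition edist (R : realType) (d : nat) (P Q : 'rV[R]_d) : R :=
  Num.sqrt (\sum_(k < d) (P ord0 k - Q ord0 k) ^+ 2).

Definition psi (R : realType) (d n : nat) (Q : 'I_n -> 'rV[R]_d) (i j : 'I_n)
  (P : 'rV[R]_d) : R := edist P (Q i) ^+ 2 - edist P (Q j) ^+ 2.

(* A real additive gain graph on {1..n} (here 'I_n): a finite type E of edges,
   each edge e with an orientation-reference pair of endpoints (ends e)
   (distinct), and gain g e = phi(e; (ends e).1, (ends e).2).
   The gain in the opposite direction is -(g e). *)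
Record gain_graph (R : realType) (n : nat) := GainGraph {
  gedge : finType;
  gends : gedge -> 'I_n * 'I_n;
  ggain : gedge -> R;
  gends_neq : forall e, (gends e).1 != (gends e).2 }.

Definition joins (R : realType) n (G : gain_graph R n) (e : gedge G) (i j : 'I_n) : bool :=
  (gends e == (i, j)) || (gends e == (j, i)).

Definition phi (R : realType) n (G : gain_graph R n) (e : gedge G) (i j : 'I_n) : R :=
  if gends e == (i, j) then ggain e else - ggain e.

Definition adjacent (R : realType) n (G : gain_graph R n) (i j : 'I_n) : Prop :=
  exists e : gedge G, joins e i j.

Definition hyp (R : realType) d n (G : gain_graph R n) (Q : 'I_n -> 'rV[R]_d) (e : gedge G)
  (P : 'rV[R]_d) : Prop :=
  psi Q (gends e).1 (gends e).2 P = phi e (gends e).1 (gends e).2.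

(* A circle with l+1 vertices v_0..v_l (paper: v_1..v_{l+1}) and edges c_0..c_l,
   edge c_k joining v_k and v_{k+1 mod (l+1)}; vertices and edges distinct. *)
Definition is_circle (R : realType) n (G : gain_graph R n) (l : nat)
  (v : 'I_l.+1 -> 'I_n) (c : 'I_l.+1 -> gedge G) : Prop :=
  injective v /\ injective c /\ forall k, joins (c k) (v k) (v (ordS k)).

Definition balanced (R : realType) n (G : gain_graph R n) (l : nat)
  (v : 'I_l.+1 -> 'I_n) (c : 'I_l.+1 -> gedge G) : Prop :=
  \sum_(k < l.+1) phi (c k) (v k) (v (ordS k)) = 0.

Definition aff_indep (R : realType) d m (X : 'I_m -> 'rV[R]_d) : Prop :=
  forall a : 'I_m -> R,
    \sum_(k < m) a k = 0 -> \sum_(k < m) a k *: X k = 0 -> forall k, a k = 0.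

Definition affine_flat_dim (R : realType) d (S : 'rV[R]_d -> Prop) (m : nat) : Prop :=
  exists (P0 : 'rV[R]_d) (U : {vspace 'rV[R]_d}),
    \dim U = m /\ forall P, S P <-> P - P0 \in U.

From mathcomp Require Import all_boot all_order all_algebra.
From mathcomp Require Import reals.
From mathcomp Require Import zify ring lra.
Set Implicit Arguments. Unset Strict Implicit. Unset Printing Implicit Defensive.
Import Order.TTheory GRing.Theory Num.Theory.
Local Open Scope ring_scope.

(* For fixed points X, Y the function P |-> d(P,X)^2 - d(P,Y)^2 is affine with
   linear part -2 <P, X - Y>, so every hyperplane h(e) of the circle is an
   affine hyperplane with normal Q_i - Q_j.  Along a balanced circle the
   conditions d(P,Q_{v_k})^2 - d(P,Q_{v_(k+1)})^2 = phi(c_k) telescope: they are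
   equivalent to the l conditions fixing d(P,Q_{v_0})^2 - d(P,Q_{v_k})^2 to the
   partial gain sums, the last of the l+1 original equations being implied by
   balance.  The normals Q_{v_0} - Q_{v_k} of these l equations are linearly
   independent by affine independence, so the solution set is a flat of
   dimension d - l. *)

Lemma edist_sqr (R : realType) d (P X : 'rV[R]_d) :
  edist P X ^+ 2 = \sum_(i < d) (P 0 i - X 0 i) ^+ 2.
Proof. by rewrite /edist sqr_sqrtr // sumr_ge0 // => i _; rewrite sqr_ge0. Qed.

Lemma edist_sqrB (R : realType) d (P X Y : 'rV[R]_d) :
  edist P X ^+ 2 - edist P Y ^+ 2 =
  edist 0 X ^+ 2 - edist 0 Y ^+ 2 - 2 * (P *m (X - Y)^T) 0 0.
Proof.
rewrite !edist_sqr -!sumrB !mxE mulr_sumr -sumrB.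
by apply: eq_bigr => i _; rewrite !mxE; ring.
Qed.

Lemma hyp_joins (R : realType) d n (G : gain_graph R n) (Q : 'I_n -> 'rV[R]_d)
  (e : gedge G) i j P : joins e i j -> hyp Q e P <-> psi Q i j P = phi e i j.
Proof.
rewrite /joins /hyp => /orP [] /eqP ends_e; first by rewrite ends_e.
have ji : (j, i) != (i, j).
  by apply: contraNneq (gends_neq e); rewrite ends_e => -[->].
rewrite /phi ends_e /= eqxx (negbTE ji) /psi.
by split => [<- | /eqP]; rewrite ?opprB // -eqr_oppLR opprB => /eqP.
Qed.

Lemma ordS_inord l m : (m < l)%N -> ordS (inord m : 'I_l.+1) = inord m.+1.
Proof. by move=> ml; apply: val_inj; rewrite /= !inordK ?modn_small //; lia. Qed.

Lemma ordS_max l : ordS (ord_max : 'I_l.+1) = ord0.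
Proof. by apply: val_inj; rewrite /= modnn. Qed.

Lemma cycle_differences_prefix_sums (V : zmodType) l (e g : 'I_l.+1 -> V) :
  \sum_k g k = 0 ->
  (forall k, e k - e (ordS k) = g k) <->
  (forall k : 'I_l.+1, e ord0 - e k = \sum_(j < k) g (inord j)).
Proof.
move=> sum_g0; split => [cyc k | pref k].
  suff pref m : (m <= l)%N -> e ord0 - e (inord m) = \sum_(j < m) g (inord j).
    by rewrite -pref ?inord_val // -ltnS.
  elim: m => [|m IHm] ml.
    by rewrite big_ord0 (_ : inord 0 = ord0) ?subrr //; apply: val_inj; rewrite /= inordK.
  rewrite big_ord_recr /= -IHm; last exact: ltnW.
  by rewrite -(cyc (inord m)) ordS_inord // subrKA.
have [kl|lk] := ltnP k l.
  have ordS_k : ordS k = inord k.+1 by rewrite -ordS_inord // inord_val.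
  have := pref (inord k.+1); rewrite inordK; last by rewrite ltnS.
  rewrite -ordS_k big_ord_recr /= inord_val -pref => split_k.
  by rewrite -(subrKA (e ord0)) split_k addrA subrKA subrr add0r.
have -> : k = ord_max.
  by apply: val_inj; apply/eqP; rewrite /= eqn_leq lk andbT -ltnS.
have sum_g : \sum_(j < l) g (inord j) + g ord_max = 0.
  rewrite -[RHS]sum_g0 big_ord_recr /=; congr (_ + _).
  by apply: eq_bigr => j _; congr g; apply: val_inj; rewrite /= inordK //; exact: leqW.
rewrite ordS_max -opprB pref /=; apply/esym/eqP.
by rewrite -addr_eq0 addrC sum_g.
Qed.

Definition diffs_mx (R : pzRingType) d l (X : 'I_l.+1 -> 'rV[R]_d) : 'M[R]_(l, d) :=
  \matrix_k (X ord0 - X (lift ord0 k)).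

Lemma aff_indep_row_free (R : realType) d l (X : 'I_l.+1 -> 'rV[R]_d) :
  aff_indep X -> row_free (diffs_mx X).
Proof.
move=> indX; apply: inj_row_free => u uN0; apply/rowP => k.
pose a j := if unlift ord0 j is Some i then - u 0 i else \sum_i u 0 i.
have a0 : a ord0 = \sum_i u 0 i by rewrite /a unlift_none.
have a_lift i : a (lift ord0 i) = - u 0 i by rewrite /a liftK.
have sum_a : \sum_j a j = 0.
  by rewrite big_ord_recl a0 (eq_bigr _ (fun i _ => a_lift i)) sumrN subrr.
have sum_aX : \sum_j a j *: X j = 0.
  rewrite big_ord_recl a0 (eq_bigr _ (fun i _ => congr1 (fun t => t *: _) (a_lift i))).
  rewrite -[RHS]uN0 mulmx_sum_row scaler_suml -big_split; apply: eq_bigr => i _ /=.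
  by rewrite rowK scalerBr scaleNr.
by apply/eqP; rewrite mxE -oppr_eq0 -a_lift indX.
Qed.

Lemma row_full_solutions_flat (R : realType) d l (M : 'M[R]_(d, l)) (b : 'rV_l)
  (S : 'rV[R]_d -> Prop) :
  (forall P, S P <-> P *m M = b) -> row_full M -> affine_flat_dim S (d - l).
Proof.
move=> SE /row_fullP[B BM1].
have surjM y : y = (y *m B) *m M by rewrite -mulmxA BM1 mulmx1.
pose f : 'Hom('rV[R]_d, 'rV[R]_l) := linfun (mulmxr M).
have fE x : f x = x *m M by rewrite lfunE.
exists (b *m B), (lker f); split => [|P]; last first.
  by rewrite SE memv_ker fE mulmxBl -surjM subr_eq0; split => /eqP.
have limg_f : (f @: fullv)%VS = fullv.
  apply/eqP; rewrite eqEsubv subvf; apply/subvP => y _.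
  by rewrite [y]surjM -fE memv_img ?memvf.
have := limg_ker_dim f fullv; rewrite capfv limg_f !dimvf /dim /= !mul1n.
by move/(congr1 (subn^~ l)); rewrite /= addnK.
Qed.

Lemma balanced_circle_hyps_system (R : realType) d n (G : gain_graph R n)
  (Q : 'I_n -> 'rV[R]_d) l (v : 'I_l.+1 -> 'I_n) (c : 'I_l.+1 -> gedge G) :
  is_circle v c -> balanced v c -> forall P,
  (forall k, hyp Q (c k) P) <->
  P *m (diffs_mx (Q \o v))^T =
    \row_(k < l) ((psi Q (v ord0) (v (lift ord0 k)) 0 -
                   \sum_(j < k.+1) phi (c (inord j)) (v (inord j)) (v (ordS (inord j)))) / 2).
Proof.
move=> [_ [_ c_joins]] bal P.
have -> : (forall k, hyp Q (c k) P) <->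
          (forall k, psi Q (v k) (v (ordS k)) P = phi (c k) (v k) (v (ordS k))).
  by split => H k; have := H k; rewrite (hyp_joins _ _ (c_joins k)).
rewrite (cycle_differences_prefix_sums (fun k => edist P (Q (v k)) ^+ 2) bal).
have entry k : (P *m (diffs_mx (Q \o v))^T) 0 k =
                (P *m (Q (v ord0) - Q (v (lift ord0 k)))^T) 0 0.
  by rewrite !mxE; apply: eq_bigr => i _; rewrite !mxE.
split => [pref | /rowP sys k].
  apply/rowP => k; rewrite [RHS]mxE entry.
  by move: (pref (lift ord0 k)); rewrite edist_sqrB lift0 /psi; lra.
have [k' ->|->] := unliftP ord0 k; last by rewrite subrr big_ord0.
by move: (sys k'); rewrite [RHS]mxE entry edist_sqrB lift0 /psi; lra.
Qed.

Theorem lemma5p3 (R : realType) (d n : nat) (G : gain_graph R n)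
  (Q : 'I_n -> 'rV[R]_d)
  (hQ : forall i j : 'I_n, adjacent G i j -> Q i != Q j)
  (l : nat) (v : 'I_l.+1 -> 'I_n) (c : 'I_l.+1 -> gedge G)
  (hC : is_circle v c)
  (hind : aff_indep (fun k => Q (v k)))
  (hbal : balanced v c) :
  affine_flat_dim (fun P => forall k : 'I_l.+1, hyp Q (c k) P) (d - l).
Proof.
apply: (row_full_solutions_flat (balanced_circle_hyps_system Q hC hbal)).
by rewrite /row_full mxrank_tr; apply: aff_indep_row_free.
Qed.
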